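(* Let $G=\mathrm{Cay}(\Gamma,S)$ be a Cayley graph with $D=|S|$. Then for every finite nonempty set $K\subset V$, $$\frac{|\partial_E K|}{D|K|}\geq\frac{1}{16\,\overline{R}(2|K|)},$$ with the convention $1/\infty=0$.
   Context: $S$ is a finite symmetric generating set of $\Gamma$, $V=\Gamma$, and $\partial_E K=\{\{x,y\}\in E: x\in K, y\notin K\}$ is the edge boundary. Define $\mathcal{B}(n)=\min_H|B_H(o,n)|$, where the minimum ranges over all Cayley graphs $H=\mathrm{Cay}(\Gamma',S')$ with $S'\subseteq S$ symmetric, $|S'|\ge |S|/2$, and $\Gamma'$ the subgroup of $\Gamma$ generated by $S'$; $B_H(o,n)$ is the ball of radius $n$ about the identity $o$ in $H$. Define $\overline{R}(m)=\min\{n\ge1:\mathcal{B}(n)\ge m\}$, with $\overline{R}(m)=\infty$ if $\mathcal{B}(n)<m$ for all $n\ge1$. *)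

(* Abstract (possibly infinite) group given by explicit
   operations on an eqType; finite subsets are duplicate-free sequences. *)
From mathcomp Require Import all_boot all_order all_algebra.
From Stdlib Require Import ClassicalEpsilon.
Set Implicit Arguments. Unset Strict Implicit. Unset Printing Implicit Defensive.
Import Order.TTheory GRing.Theory Num.Theory.

Section CayleyDefs.
Variables (T : eqType) (mul : T -> T -> T) (one : T) (inv : T -> T).

Definition is_group : Prop :=
  [/\ associative mul, left_id one mul & forall x, mul (inv x) x = one].

Definition symmetric_set (S : seq T) : bool := all (fun s => inv s \in S) S.

Definition generates (S : seq T) : Prop :=
  forall g : T, exists w : seq T, all (fun s => s \in S) w /\ g = foldr mul one w.

(* Ball of radius n about the identity in Cay(<S'>, S'), edges x ~ x s:
   the elements that are products of at most n generators from S'. *)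
Fixpoint ball (S' : seq T) (n : nat) : seq T :=
  match n with
  | 0 => [:: one]
  | n'.+1 => undup (ball S' n' ++ [seq mul x s | x <- ball S' n', s <- S'])
  end.

Definition ball_size (S' : seq T) (n : nat) : nat := size (ball S' n).

Definition admissible (S S' : seq T) : bool :=
  symmetric_set S' && (size S <= 2 * size S').

(* \mathcal B(n) = min over admissible S' subseteq S of |B_H(o,n)|;
   S itself is admissible, so its ball size is a valid neutral start. *)
Definition calB (S : seq T) (n : nat) : nat :=
  \big[minn/ball_size S n]_(m : (size S).-tuple bool | admissible S (mask m S))
     ball_size (mask m S) n.

Definition Rbar_pred (S : seq T) (m : nat) : pred nat :=
  fun n => (1 <= n) && (m <= calB S n).

(* \overline R(m) : Some n = the least n >= 1 with calB n >= m, None = infinity *)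
Definition Rbar (S : seq T) (m : nat) : option nat :=
  match excluded_middle_informative (exists n, Rbar_pred S m n) with
  | left H => Some (ex_minn H)
  | right _ => None
  end.

(* edge boundary of K, each boundary edge {x,y} recorded as (x,y) with x in K *)
Definition edge_boundary (S K : seq T) : seq (T * T) :=
  undup [seq e <- [seq (x, mul x s) | x <- K, s <- S] | e.2 \notin K].

End CayleyDefs.

Definition inv16_ext (o : option nat) : rat :=
  match o with
  | Some r => (16 * r)%:R^-1
  | None => 0
  end.

From mathcomp Require Import all_boot all_order all_algebra zify.
From Stdlib Require Import ClassicalEpsilon.
Import Order.TTheory.
Set Implicit Arguments. Unset Strict Implicit. Unset Printing Implicit Defensive.

(* For g in the group let exit_count g be the number of x in K with x g outside K.
   It vanishes at the identity, is subadditive, and the edge boundary of K has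
   size sum_(s in S) exit_count s.  By Markov's inequality at most D/4
   generators s have D * exit_count s > 4 |dK|; discarding them together with
   their inverses leaves an admissible symmetric S', whose ball B of radius
   R = Rbar(2|K|) has at least 2|K| elements.  Double counting gives
   sum_(g in B) exit_count g >= |B||K| - |K|^2 >= |B||K|/2, so some g in B has
   exit_count g >= |K|/2, while subadditivity bounds exit_count on B by
   R * 4|dK|/D.  Hence D|K| <= 8 R |dK|, better than the stated 16. *)

Lemma count_sum (A : Type) (a : pred A) (r : seq A) :
  count a r = \sum_(x <- r) a x.
Proof. by elim: r => [|x r IHr]; rewrite ?big_nil ?big_cons //= IHr. Qed.

Lemma sum_count_exchange (I J : Type) (rI : seq I) (rJ : seq J) (p : I -> J -> bool) :
  \sum_(i <- rI) count (p i) rJ = \sum_(j <- rJ) count (p^~ j) rI.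
Proof.
under eq_bigr do rewrite count_sum.
by rewrite exchange_big; apply: eq_bigr => j _; rewrite count_sum.
Qed.

Lemma markov_count (T : Type) (F : T -> nat) (r : seq T) c :
  c * count (fun x => c * \sum_(y <- r) F y < size r * F x) r <= size r.
Proof.
pose b := \sum_(y <- r) F y; pose heavy x := c * b < size r * F x.
change (c * count heavy r <= size r).
have heavy_mass : count heavy r * (c * b).+1 <= size r * b.
  rewrite count_sum big_distrl /b [X in _ <= X]big_distrr /=; apply: leq_sum => x _.
  by rewrite /heavy; case: ltnP; rewrite ?mul1n.
rewrite leqNgt; apply/negP => many_heavy.
have := leq_mul (ltnW many_heavy) (leqnn b); nia.
Qed.

Section GroupFacts.
Variables (T : eqType) (mul : T -> T -> T) (one : T) (inv : T -> T).
Hypothesis group : is_group mul one inv.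

Lemma mulgA : associative mul.
Proof. by case: group. Qed.

Lemma mul1g : left_id one mul.
Proof. by case: group. Qed.

Lemma mulVg x : mul (inv x) x = one.
Proof. by case: group => _ _; apply. Qed.

Lemma mulgI : right_injective mul.
Proof. by move=> x y z eq_xy; rewrite -(mul1g y) -(mul1g z) -(mulVg x) -!mulgA eq_xy. Qed.

Lemma mulgV x : mul x (inv x) = one.
Proof.
set e := mul x (inv x).
have idem_e : mul e e = e by rewrite /e -mulgA (mulgA (inv x) x) mulVg mul1g.
by rewrite -(mul1g e) -(mulVg e) -mulgA idem_e.
Qed.

Lemma mulg1 : right_id one mul.
Proof. by move=> x; rewrite -(mulVg x) mulgA mulgV mul1g. Qed.

Lemma mulIg : left_injective mul.
Proof. by move=> x y z eq_yz; rewrite -(mulg1 y) -(mulg1 z) -(mulgV x) !mulgA eq_yz. Qed.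

Lemma invgK : involutive inv.
Proof. by move=> x; apply: (@mulIg (inv x)); rewrite mulVg mulgV. Qed.

End GroupFacts.

Arguments mulgI {T mul one inv} group y [x1 x2].
Arguments mulIg {T mul one inv} group x [x1 x2].

Section Ball.
Variables (T : eqType) (mul : T -> T -> T) (one : T).

Lemma ball_uniq S n : uniq (ball mul one S n).
Proof. by case: n => [|n] //=; apply: undup_uniq. Qed.

Lemma ball_nil n : ball mul one [::] n = [:: one].
Proof. by elim: n => [|n IHn] //=; rewrite IHn. Qed.

Lemma mem_ballS S n g : g \in ball mul one S n.+1 ->
  g \in ball mul one S n \/
  exists2 h, h \in ball mul one S n & exists2 s, s \in S & g = mul h s.
Proof.
rewrite /= mem_undup mem_cat => /orP [->|]; first by left.
by case/allpairsP => -[h s] [/= hB sS ->]; right; exists h => //; exists s.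
Qed.

End Ball.

Section ExitCount.
Variables (T : eqType) (mul : T -> T -> T) (one : T) (inv : T -> T).
Hypothesis group : is_group mul one inv.
Variable K : seq T.
Hypothesis uniqK : uniq K.

Definition exit_count g := count (fun x => mul x g \notin K) K.

Lemma exit_count1 : exit_count one = 0.
Proof.
rewrite /exit_count -(count_pred0 K); apply: eq_in_count => x xK /=.
by rewrite (mulg1 group) xK.
Qed.

Lemma exit_countM h s : exit_count (mul h s) <= exit_count h + exit_count s.
Proof.
pose enter_then_exit x := (mul x h \in K) && (mul (mul x h) s \notin K).
have exit_split : exit_count (mul h s)
    <= exit_count h + count enter_then_exit K.
  rewrite /exit_count -count_predUI; apply: leq_trans (leq_addr _ _).
  apply: sub_count => x /=; rewrite /enter_then_exit (mulgA group).
  by case: (mul x h \in K).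
have second_exit : count enter_then_exit K <= exit_count s.
  rewrite /exit_count -!size_filter -(size_map (mul^~ h)).
  apply: uniq_leq_size.
    by rewrite (map_inj_uniq (mulIg group h)) filter_uniq.
  move=> y /mapP [x]; rewrite mem_filter => /andP [/andP [xhK xhsK] _] ->.
  by rewrite mem_filter xhsK.
by rewrite (leq_trans exit_split) ?leq_add2l.
Qed.

Lemma exit_count_ball S n g : g \in ball mul one S n ->
  exit_count g <= n * \max_(s <- S) exit_count s.
Proof.
elim: n g => [|n IHn] g; first by rewrite inE => /eqP ->; rewrite exit_count1.
case/mem_ballS => [/IHn | [h /IHn hB [s sS ->]]].
  by move/leq_trans; apply; rewrite leq_mul2r leqnSn orbT.
rewrite (leq_trans (exit_countM h s)) // mulSn addnC leq_add //.
exact: leq_bigmax_seq.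
Qed.

Lemma size_edge_boundary S : uniq S ->
  size (edge_boundary mul S K) = \sum_(s <- S) exit_count s.
Proof.
move=> uniqS; rewrite /edge_boundary undup_id; last first.
  rewrite filter_uniq // allpairs_uniq // => -[x s] [y t] _ _ /= [-> eq_xs_yt].
  by move/(mulgI group y): eq_xs_yt => ->.
rewrite size_filter count_flatten sumnE !big_map.
under eq_bigr do rewrite count_map.
exact: sum_count_exchange.
Qed.

Lemma sum_exit_count_ge B : uniq B ->
  size B * size K <= \sum_(g <- B) exit_count g + size K * size K.
Proof.
move=> uniqB; pose stay g x := mul x g \in K.
have exit_stay : \sum_(g <- B) (exit_count g + count (stay g) K) = size B * size K.
  under eq_bigr do rewrite addnC count_predC.
  by rewrite big_const_seq iter_addn_0 count_predT mulnC.
have stay_le : \sum_(g <- B) count (stay g) K <= size K * size K.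
  rewrite sum_count_exchange -[X in _ <= X * _]sum1_size big_distrl /=.
  apply: leq_sum => x _; rewrite mul1n -size_filter -(size_map (mul x)).
  apply: uniq_leq_size; first by rewrite (map_inj_uniq (mulgI group x)) filter_uniq.
  by move=> y /mapP [g]; rewrite mem_filter => /andP [xgK _] ->.
by rewrite -exit_stay big_split leq_add2l.
Qed.

Lemma exit_count_max_ge B : uniq B -> 2 * size K <= size B ->
  size K <= 2 * \max_(g <- B) exit_count g.
Proof.
move=> uniqB large_B; pose M := \max_(g <- B) exit_count g.
have sum_le : \sum_(g <- B) exit_count g <= size B * M.
  rewrite -[size B]sum1_size big_distrl /= !big_seq; apply: leq_sum => g gB.
  by rewrite mul1n; apply: leq_bigmax_seq.
have := sum_exit_count_ge uniqB; nia.
Qed.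

End ExitCount.

Section LightGenerators.
Variables (T : eqType) (inv : T -> T).
Hypothesis invK : involutive inv.
Variables (S : seq T) (F : T -> nat).
Hypotheses (uniqS : uniq S) (symS : symmetric_set inv S).

Definition light s := size S * F s <= 4 * \sum_(t <- S) F t.

Definition light_generators := [seq s <- S | light s && light (inv s)].

Lemma perm_map_inv : perm_eq (map inv S) S.
Proof.
have inS_inv s : (inv s \in S) = (s \in S).
  apply/idP/idP => [/(allP symS)|/(allP symS)//]; by rewrite invK.
apply: uniq_perm => //; first by rewrite (map_inj_uniq (can_inj invK)).
by move=> s; rewrite -{1}(invK s) (mem_map (can_inj invK)) inS_inv.
Qed.

Lemma light_generators_sym : symmetric_set inv light_generators.
Proof.
apply/allP => s; rewrite !mem_filter invK => /andP [/andP [light_s light_inv_s] sS].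
by rewrite light_s light_inv_s (allP symS).
Qed.

Lemma size_light_generators : size S <= 2 * size light_generators.
Proof.
have few_heavy : 4 * count (predC light) S <= size S.
  have -> : count (predC light) S
      = count (fun s => 4 * \sum_(t <- S) F t < size S * F s) S.
    by apply: eq_count => s; rewrite /= ltnNge.
  exact: markov_count.
have heavy_inv : count (predC light \o inv) S = count (predC light) S.
  by rewrite -count_map (permP perm_map_inv).
have few_dropped : count (predC (fun s => light s && light (inv s))) S
    <= count (predC light) S + count (predC light \o inv) S.
  rewrite -count_predUI; apply: leq_trans (leq_addr _ _).
  by apply: sub_count => s /=; rewrite negb_and.
have := count_predC (fun s => light s && light (inv s)) S.
rewrite size_filter; lia.
Qed.

Lemma light_generators_max :
  size S * \max_(s <- light_generators) F s <= 4 * \sum_(t <- S) F t.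
Proof.
rewrite big_distrr /=; apply/bigmax_leqP_seq => s.
by rewrite mem_filter => /andP [/andP [light_s _] _].
Qed.

End LightGenerators.

Section GrowthFunction.
Variables (T : eqType) (mul : T -> T -> T) (one : T) (inv : T -> T).

Lemma calB_le_filter S (p : pred T) n : admissible inv S (filter p S) ->
  calB mul one inv S n <= ball_size mul one (filter p S) n.
Proof.
rewrite filter_mask -[map p S]/(tval (map_tuple p (in_tuple S))) => adm.
exact: (bigmin_le_cond (T := nat)
  (P := fun m : (size S).-tuple bool => admissible inv S (mask m S)) _ _ adm).
Qed.

Lemma Rbar_calB S m r : Rbar mul one inv S m = Some r -> m <= calB mul one inv S r.
Proof.
rewrite /Rbar; case: excluded_middle_informative => // exists_r [<-].
by case: ex_minnP => n /andP [].
Qed.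

End GrowthFunction.

Section RatioBound.
Import GRing.Theory Num.Theory.

Lemma inv16_ext_le_ratio (o : option nat) (b d : nat) :
  (forall r, o = Some r -> (0 < d <= 16 * r * b)%N) ->
  (inv16_ext o <= b%:R / d%:R :> rat)%R.
Proof.
case: o => [r /(_ r erefl) /andP [d_gt0 d_le]|_]; last by rewrite divr_ge0 ?ler0n.
have r_gt0 : (0 < 16 * r)%N.
  by rewrite lt0n; apply: contraTneq d_le => ->; rewrite -ltnNge.
rewrite ler_pdivlMr ?ltr0n // mulrC ler_pdivrMr ?ltr0n // -natrM ler_nat.
by rewrite mulnC.
Qed.

End RatioBound.

Theorem lemma3p4 (T : eqType) (mul : T -> T -> T) (one : T) (inv : T -> T)
  (S : seq T) (K : seq T) :
  is_group mul one inv ->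
  uniq S -> symmetric_set inv S -> generates mul one S -> one \notin S ->
  uniq K -> K != [::] ->
  (inv16_ext (Rbar mul one inv S (2 * size K)) <=
     (size (edge_boundary mul S K))%:R / ((size S * size K)%:R) :> rat)%R.
Proof.
move=> group uniqS symS _ _ uniqK K_neq0; have invK := invgK group.
apply: inv16_ext_le_ratio => R /Rbar_calB calB_ge.
rewrite (size_edge_boundary group uniqK uniqS).
set S' := light_generators inv S (exit_count mul K).
have ball_large : 2 * size K <= size (ball mul one S' R).
  apply: (leq_trans calB_ge); apply: calB_le_filter.
  by rewrite /admissible light_generators_sym ?size_light_generators.
have K_gt0 : 0 < size K by rewrite lt0n size_eq0.
have S_gt0 : 0 < size S.
  rewrite lt0n size_eq0; apply/eqP => S_nil.
  by move: ball_large; rewrite /S' S_nil ball_nil /=; lia.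
set Ms := \max_(s <- S') exit_count mul K s.
have K_le : size K <= 2 * (R * Ms).
  apply: leq_trans (exit_count_max_ge group uniqK (ball_uniq _ _ _ _) ball_large) _.
  rewrite leq_mul2l; apply/orP; right; apply/bigmax_leqP_seq => g gB _.
  exact: (exit_count_ball group uniqK).
have light_max : size S * Ms <= 4 * \sum_(s <- S) exit_count mul K s.
  exact: light_generators_max.
rewrite muln_gt0 S_gt0 K_gt0 /=.
have := leq_mul (leqnn (size S)) K_le; have := leq_mul (leqnn (2 * R)) light_max.
nia.
Qed.
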